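(* There is a constant $c>0$ such that for all integers $n,m$ with $1\le m<n$ there is an instance $(\mathcal{I},\mathcal{T},p^0)$ of the Shape Reconfiguration Problem with $|\mathcal{I}|=|\mathcal{T}|=n$ and $|\mathcal{I}\setminus\mathcal{T}|=m$ (with both $\mathcal{I}$ and $\mathcal{T}$ simply connected) such that every valid sequence of legal agent actions solving it has length at least $c\,mn$. Concretely, one may take $\mathcal{I}=\{v_1,\dots,v_n\}$ and $\mathcal{T}=\{v_{m+1},\dots,v_{n+m}\}$ where $v_{i+1}=v_i+(0,2)$ (a straight line of nodes), with $p^0=v_n$.
   Context: Hybrid model. Let $G=(V,E)$ be the infinite triangular lattice with $V=\{(x,y)\in\mathbb{Z}^2 : x+y \text{ even}\}$, where the six neighbors of a node $v$ are $v+\vec d$ for $\vec d\in\{(0,-2),(1,-1),(1,1),(0,2),(-1,1),(-1,-1)\}$. A set $S\subseteq V$ is connected if $G[S]$ is connected, and simply connected if $V\setminus S$ is connected. A single agent and finitely many indistinguishable tiles occupy nodes; each node holds at most one tile; the agent occupies one node and carries at most one tile. A configuration $(\mathcal{C},p)$ ($\mathcal{C}$ = tiled nodes, $p$ = agent node) is connected if $\mathcal{C}$ is connected, or if the agent carries a tile and $\mathcal{C}\cup\{p\}$ is connected. In each time step the agent performs one action: move to an adjacent node, lift the tile at its node (if not carrying one), or place its carried tile at its node (if untiled); every resulting configuration must be connected. Shape Reconfiguration Problem: given connected $\mathcal{I},\mathcal{T}\subseteq V$ with $|\mathcal{I}|=|\mathcal{T}|=n$, $\mathcal{I}\cap\mathcal{T}$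 non-empty and connected, and $p^0\in\mathcal{I}$ (initial tiled set $\mathcal{I}$, agent not carrying a tile), a solution is a sequence of connected configurations, each obtained from the previous by one legal action, ending with tiled set exactly $\mathcal{T}$; its length is the number of actions. *)

From Stdlib Require Import ZArith List Reals.
Open Scope Z_scope.

(** Nodes of the triangular lattice: points (x,y) of Z^2 with x+y even. *)
Definition node : Type := (Z * Z)%type.
Definition inV (v : node) : Prop := Z.Even (fst v + snd v).

Definition adj (u v : node) : Prop :=
  let dx := fst v - fst u in
  let dy := snd v - snd u in
  (dx = 0 /\ dy = -2) \/ (dx = 1 /\ dy = -1) \/ (dx = 1 /\ dy = 1) \/
  (dx = 0 /\ dy = 2) \/ (dx = -1 /\ dy = 1) \/ (dx = -1 /\ dy = -1).

Inductive path_in (S : node -> Prop) : node -> node -> Prop :=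
| pin_refl : forall u, S u -> path_in S u u
| pin_step : forall u v w, S u -> adj u v -> path_in S v w -> path_in S u w.

Definition connected (S : node -> Prop) : Prop :=
  forall u v, S u -> S v -> path_in S u v.

Definition simply_connected (S : node -> Prop) : Prop :=
  connected (fun v => inV v /\ ~ S v).

Definition has_card (P : node -> Prop) (n : nat) : Prop :=
  exists l : list node, NoDup l /\ (forall x, In x l <-> P x) /\ length l = n.

Record config : Type := mkConfig {
  tiles : node -> Prop;
  agent : node;
  carrying : bool }.

Definition config_connected (c : config) : Prop :=
  connected (tiles c) \/
  (carrying c = true /\ connected (fun v => tiles c v \/ v = agent c)).

Definition legal_action (c c' : config) : Prop :=
  (adj (agent c) (agent c') /\ (forall v, tiles c' v <-> tiles c v) /\
     carrying c' = carrying c)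
  \/ (carrying c = false /\ tiles c (agent c) /\ agent c' = agent c /\
      carrying c' = true /\ (forall v, tiles c' v <-> (tiles c v /\ v <> agent c)))
  \/ (carrying c = true /\ ~ tiles c (agent c) /\ agent c' = agent c /\
      carrying c' = false /\ (forall v, tiles c' v <-> (tiles c v \/ v = agent c))).

Definition srp_instance (n : nat) (I T : node -> Prop) (p0 : node) : Prop :=
  (forall v, I v -> inV v) /\ (forall v, T v -> inV v) /\
  has_card I n /\ has_card T n /\ connected I /\ connected T /\
  (exists v, I v /\ T v) /\ connected (fun v => I v /\ T v) /\ I p0.

Definition solution (I T : node -> Prop) (p0 : node) (s : nat -> config) (k : nat)
  : Prop :=
  (forall v, tiles (s O) v <-> I v) /\ agent (s O) = p0 /\ carrying (s O) = false /\
  (forall i, (i < k)%nat -> legal_action (s i) (s (S i)) /\ config_connected (s (S i))) /\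
  (forall v, tiles (s k) v <-> T v).

(** The tiles form a vertical line that must be shifted up by [m] nodes, so the
    sum of the y-coordinates of the tiles grows by [2mn].  Count a carried tile
    at the height of the agent: lifting and placing leave this potential
    unchanged, and a move changes it by at most [2], the largest vertical
    displacement between neighbours.  Hence every solution has at least [mn]
    actions, i.e. [c = 1] works. *)
From Stdlib Require Import ZArith Reals.
From Stdlib Require Import List Permutation Lia Lra.
Open Scope Z_scope.

Lemma adj_sym u v : adj u v -> adj v u.
Proof. unfold adj; lia. Qed.

Lemma path_in_ends S u v : path_in S u v -> S u /\ S v.
Proof. induction 1; intuition. Qed.

Lemma path_in_trans S u v w : path_in S u v -> path_in S v w -> path_in S u w.
Proof. induction 1; intros; [assumption | eapply pin_step; eauto]. Qed.

Lemma path_in_sym S u v : path_in S u v -> path_in S v u.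
Proof.
  induction 1 as [u Hu | u v w Hu Huv Hvw IH]; [now apply pin_refl|].
  apply path_in_trans with v; [exact IH|].
  apply pin_step with u; [apply (path_in_ends _ _ _ Hvw) | now apply adj_sym | now apply pin_refl].
Qed.

Lemma path_in_mono (S S' : node -> Prop) u v :
  (forall x, S x -> S' x) -> path_in S u v -> path_in S' u v.
Proof. intros HS; induction 1; [apply pin_refl | eapply pin_step]; eauto. Qed.

Lemma connected_hub S h : (forall u, S u -> path_in S u h) -> connected S.
Proof. intros H u v Hu Hv. apply path_in_trans with h; auto using path_in_sym. Qed.

Lemma connected_ext (S S' : node -> Prop) :
  (forall v, S v <-> S' v) -> connected S -> connected S'.
Proof.
  intros H C u v Hu Hv. apply path_in_mono with S; [firstorder|].
  apply C; now apply H.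
Qed.

Definition walk (p d : node) (j : nat) : node :=
  (fst p + Z.of_nat j * fst d, snd p + Z.of_nat j * snd d).

Lemma walk_0 p d : walk p d 0 = p.
Proof. destruct p; unfold walk; cbn [fst snd]; f_equal; ring. Qed.

Lemma walk_succ p d k : walk (walk p d 1) d k = walk p d (S k).
Proof. unfold walk; cbn [fst snd]; f_equal; rewrite (Nat2Z.inj_succ k); ring. Qed.

Lemma path_in_walk P d : adj (0, 0) d -> forall k p,
  (forall j, (j <= k)%nat -> P (walk p d j)) -> path_in P p (walk p d k).
Proof.
  intros Hd k; induction k as [|k IH]; intros p HP.
  - rewrite walk_0. apply pin_refl. rewrite <- (walk_0 p d). now apply HP.
  - rewrite <- walk_succ. apply pin_step with (walk p d 1).
    + rewrite <- (walk_0 p d) at 1. apply HP; lia.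
    + unfold walk, adj in *; cbn [fst snd] in *; change (Z.of_nat 1) with 1; lia.
    + apply IH. intros j Hj. rewrite walk_succ. apply HP; lia.
Qed.

Lemma path_in_column S x y1 y2 :
  (forall y, Z.Even (x + y) -> S (x, y)) -> Z.Even (x + y1) -> Z.Even (y2 - y1) ->
  path_in S (x, y1) (x, y2).
Proof.
  intros HS [b Hb] [q Hq].
  assert (Hup : forall y k, Z.Even (x + y) ->
            path_in S (x, y) (walk (x, y) (0, 2) k)).
  { intros y k [e He]. apply path_in_walk; [unfold adj; cbn [fst snd]; lia|].
    intros j _. unfold walk; cbn [fst snd]. rewrite Z.mul_0_r, Z.add_0_r.
    apply HS. exists (e + Z.of_nat j). lia. }
  destruct (Z_le_gt_dec 0 q).
  - replace (x, y2) with (walk (x, y1) (0, 2) (Z.to_nat q))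
      by (unfold walk; cbn [fst snd]; f_equal; lia).
    apply Hup. now exists b.
  - apply path_in_sym.
    replace (x, y1) with (walk (x, y2) (0, 2) (Z.to_nat (- q)))
      by (unfold walk; cbn [fst snd]; f_equal; lia).
    apply Hup. exists (b + q). lia.
Qed.

(** Walk diagonally to the column [x = sg], then along it. *)
Lemma path_in_half_plane S (sg : Z) : sg = 1 \/ sg = -1 ->
  (forall x y, 1 <= sg * x -> Z.Even (x + y) -> S (x, y)) ->
  forall x y, 1 <= sg * x -> Z.Even (x + y) -> path_in S (x, y) (sg, 1).
Proof.
  intros Hsg HS x y Hx [b Hb].
  apply path_in_trans with (sg, y - sg * x + 1).
  - replace (sg, y - sg * x + 1) with (walk (x, y) (- sg, -1) (Z.to_nat (sg * x - 1)))
      by (unfold walk; cbn [fst snd]; f_equal; destruct Hsg; subst; lia).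
    apply path_in_walk; [unfold adj; cbn [fst snd]; lia|].
    intros j Hj. unfold walk; cbn [fst snd]. apply HS.
    + destruct Hsg; subst; lia.
    + destruct Hsg; subst; [exists (b - Z.of_nat j) | exists b]; lia.
  - apply path_in_column.
    + intros y' Hy'. apply HS; [destruct Hsg; subst; lia | exact Hy'].
    + destruct Hsg; subst; [exists (b - x + 1) | exists b]; lia.
    + destruct Hsg; subst; [exists (x - b) | exists (- b)]; lia.
Qed.

Definition vnode (i : nat) : node := (0, 2 * Z.of_nat i).
Definition line (a len : nat) : list node := map vnode (seq a len).

Lemma in_line a len v : In v (line a len) <-> exists i, (a <= i < a + len)%nat /\ v = vnode i.
Proof.
  unfold line. rewrite in_map_iff.
  split; intros [i [H1 H2]]; exists i; rewrite in_seq in *; auto.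
Qed.

Lemma vnode_inj i j : vnode i = vnode j -> i = j.
Proof. intros H%(f_equal snd). unfold vnode in H; cbn [snd] in H. lia. Qed.

Lemma in_vnode_line a len i : In (vnode i) (line a len) <-> (a <= i < a + len)%nat.
Proof.
  rewrite in_line. split; [intros [j [Hj Hij]]; apply vnode_inj in Hij; subst; auto|].
  intros Hi; now exists i.
Qed.

Lemma line_nodup a len : NoDup (line a len).
Proof. apply FinFun.Injective_map_NoDup; [exact vnode_inj | apply seq_NoDup]. Qed.

Lemma line_length a len : length (line a len) = len.
Proof. unfold line; now rewrite length_map, length_seq. Qed.

Lemma line_card a len : has_card (fun v => In v (line a len)) len.
Proof. exists (line a len). split; [apply line_nodup | split; [tauto | apply line_length]]. Qed.

Lemma line_inV a len v : In v (line a len) -> inV v.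
Proof. rewrite in_line; intros [i [_ ->]]. exists (Z.of_nat i). unfold vnode; simpl; lia. Qed.

Lemma line_connected a len : connected (fun v => In v (line a len)).
Proof.
  apply connected_hub with (vnode a). intros v Hv.
  apply in_line in Hv as [i [Hi ->]]. apply path_in_sym.
  replace (vnode i) with (walk (vnode a) (0, 2) (i - a))
    by (unfold walk, vnode; cbn [fst snd]; f_equal; lia).
  apply path_in_walk; [unfold adj; cbn [fst snd]; lia|].
  intros j Hj. replace (walk (vnode a) (0, 2) j) with (vnode (a + j))
    by (unfold walk, vnode; cbn [fst snd]; f_equal; lia).
  apply in_vnode_line; lia.
Qed.

Lemma line_simply_connected a len : (1 <= a)%nat -> simply_connected (fun v => In v (line a len)).
Proof.
  intros Ha. apply connected_hub with (1, 1).
  assert (Hline : forall x y, In (x, y) (line a len) -> x = 0 /\ 2 <= y).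
  { intros x y H. apply in_line in H as [i [Hi Hxy]].
    pose proof (f_equal fst Hxy); pose proof (f_equal snd Hxy).
    unfold vnode in *; cbn [fst snd] in *; lia. }
  assert (Hoff : forall x y, x <> 0 -> Z.Even (x + y) ->
                   inV (x, y) /\ ~ In (x, y) (line a len)).
  { intros x y Hx He. split; [exact He|]. intros H%Hline. lia. }
  assert (Hpos : forall x y, 1 <= x -> Z.Even (x + y) ->
                   path_in (fun v => inV v /\ ~ In v (line a len)) (x, y) (1, 1)).
  { intros x y Hx He. apply (path_in_half_plane _ 1); [now left | | lia | exact He].
    intros x' y' Hx' He'. apply Hoff; [lia | exact He']. }
  intros [x y] Hxy. pose proof (proj1 Hxy) as HV. unfold inV in HV; cbn [fst snd] in HV.
  destruct (Z_lt_le_dec 0 x) as [Hx | Hx]; [apply Hpos; [lia | exact HV]|].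
  destruct (Z.eq_dec x 0) as [-> | Hx0].
  - destruct HV as [b Hb].
    assert (He : Z.Even (1 + (y + 1))) by (exists (b + 1); lia).
    apply pin_step with (1, y + 1); [exact Hxy | unfold adj; cbn [fst snd]; lia|].
    apply Hpos; [lia | exact He].
  - apply path_in_trans with (-1, 1).
    + apply (path_in_half_plane _ (-1)); [now right | | lia | exact HV].
      intros x' y' Hx' He'. apply Hoff; [lia | exact He'].
    + apply pin_step with (0, 0); [apply Hoff; [lia | now exists 0] | unfold adj; cbn [fst snd]; lia|].
      apply pin_step with (1, 1); [| unfold adj; cbn [fst snd]; lia | apply Hpos; [lia | now exists 1]].
      split; [now exists 0 | intros H%Hline; lia].
Qed.

Lemma line_shift_instance n m :
  (m < n)%nat -> srp_instance n (fun v => In v (line 1 n)) (fun v => In v (line (S m) n)) (vnode 1).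
Proof.
  intros Hmn.
  split; [apply line_inV | split; [apply line_inV|]].
  split; [apply line_card | split; [apply line_card|]].
  split; [apply line_connected | split; [apply line_connected|]].
  split; [exists (vnode (S m)); rewrite !in_vnode_line; lia|].
  split; [|apply in_vnode_line; lia].
  apply connected_ext with (fun v => In v (line (S m) (n - m))); [|apply line_connected].
  intros v. rewrite !in_line. split.
  - intros [i [Hi ->]]. split; exists i; split; auto; lia.
  - intros [[i [Hi ->]] [j [Hj Hij%vnode_inj]]]. exists i. split; [lia | reflexivity].
Qed.

Lemma line_shift_diff_card n m :
  (m < n)%nat ->
  has_card (fun v => In v (line 1 n) /\ ~ In v (line (S m) n)) m.
Proof.
  intros Hmn. exists (line 1 m).
  split; [apply line_nodup | split; [|apply line_length]].
  intros v. split.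
  - intros Hv. apply in_line in Hv as [i [Hi ->]]. rewrite !in_vnode_line. lia.
  - intros [Hv Hv']. apply in_line in Hv as [i [Hi ->]].
    rewrite in_vnode_line in *. lia.
Qed.

Definition ysum (l : list node) : Z := fold_right (fun v acc => snd v + acc) 0 l.

Lemma ysum_app l1 l2 : ysum (l1 ++ l2) = ysum l1 + ysum l2.
Proof. induction l1; simpl; lia. Qed.

Lemma ysum_perm l l' : Permutation l l' -> ysum l = ysum l'.
Proof. induction 1; simpl; lia. Qed.

Lemma ysum_line len : forall a,
  ysum (line a len) = Z.of_nat len * (2 * Z.of_nat a + Z.of_nat len - 1).
Proof.
  induction len as [|len IH]; intros a; [reflexivity|].
  change (ysum (line a (S len))) with (2 * Z.of_nat a + ysum (line (S a) len)).
  rewrite IH, !Nat2Z.inj_succ. ring.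
Qed.

Definition carried (c : config) : nat := if carrying c then 1%nat else 0%nat.

Definition potential (c : config) (l : list node) : Z :=
  ysum l + (if carrying c then snd (agent c) else 0).

Definition enumerates (n : nat) (c : config) (l : list node) : Prop :=
  NoDup l /\ (forall x, In x l <-> tiles c x) /\ (length l + carried c = n)%nat.

Lemma legal_action_potential n c c' l :
  enumerates n c l -> legal_action c c' ->
  exists l', enumerates n c' l' /\ potential c' l' <= potential c l + 2.
Proof.
  unfold enumerates, potential, carried.
  intros [Hnd [Hin Hlen]]
    [[Hadj [Ht Hc]] | [[Hcf [Hat [Hag [Hct Ht]]]] | [Hct [Hnt [Hag [Hcf Ht]]]]]].
  - exists l. rewrite Hc. split; [split; [exact Hnd | split; [|exact Hlen]]|].
    + intros x. now rewrite Hin, Ht.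
    + destruct (carrying c); unfold adj in Hadj; lia.
  - assert (Ha : In (agent c) l) by now apply Hin.
    destruct (in_split _ _ Ha) as [l1 [l2 ->]].
    pose proof (NoDup_remove_2 _ _ _ Hnd) as Hfresh.
    exists (l1 ++ l2). rewrite Hct, Hcf, Hag in *.
    split; [split; [eapply NoDup_remove_1; eauto | split]|].
    + intros x. rewrite Ht, <- Hin, !in_app_iff. simpl. split.
      * intros H. split; [tauto|]. intros ->. now apply Hfresh, in_app_iff.
      * intros [[H | [H | H]] Hne]; [tauto | congruence | tauto].
    + rewrite length_app in *. simpl in *. lia.
    + rewrite !ysum_app. simpl. lia.
  - exists (agent c :: l). rewrite Hct, Hcf in *.
    split; [split; [constructor; [now rewrite Hin | exact Hnd] | split]|].
    + intros x. rewrite Ht. simpl. rewrite Hin. intuition.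
    + simpl. lia.
    + simpl. lia.
Qed.

Lemma solution_potential n I T p0 s k lI :
  NoDup lI -> length lI = n -> (forall x, In x lI <-> I x) ->
  solution I T p0 s k -> forall i, (i <= k)%nat ->
  exists l, enumerates n (s i) l /\ potential (s i) l <= ysum lI + 2 * Z.of_nat i.
Proof.
  intros Hnd Hlen HI [H0 [_ [Hc0 [Hst _]]]] i.
  induction i as [|i IH]; intros Hi.
  - exists lI. unfold enumerates, potential, carried. rewrite Hc0.
    split; [split; [exact Hnd | split; [|lia]]|]; [intros x; now rewrite HI, H0 | lia].
  - destruct IH as [l [Hl Hp]]; [lia|].
    destruct (legal_action_potential _ _ _ _ Hl (proj1 (Hst i ltac:(lia))))
      as [l' [Hl' Hp']].
    exists l'. split; [exact Hl' | lia].
Qed.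

(** Since the number of tiles is conserved and the final tiled set has [n] nodes,
    the agent carries nothing at the end, so only [ysum] remains. *)
Lemma solution_ysum_bound n I T p0 s k lI lT :
  NoDup lI -> length lI = n -> (forall x, In x lI <-> I x) ->
  NoDup lT -> length lT = n -> (forall x, In x lT <-> T x) ->
  solution I T p0 s k -> ysum lT <= ysum lI + 2 * Z.of_nat k.
Proof.
  intros HndI HlenI HI HndT HlenT HT Hsol.
  destruct (solution_potential _ _ _ _ _ _ _ HndI HlenI HI Hsol k (le_n k))
    as [l [[Hnd [Hin Hlen]] Hp]].
  destruct Hsol as [_ [_ [_ [_ Hk]]]].
  assert (Hperm : Permutation l lT).
  { apply NoDup_Permutation; [exact Hnd | exact HndT|].
    intros x. now rewrite Hin, Hk, HT. }
  assert (Hcar : carrying (s k) = false).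
  { rewrite (Permutation_length Hperm) in Hlen. unfold carried in Hlen.
    destruct (carrying (s k)); [lia | reflexivity]. }
  unfold potential in Hp. rewrite Hcar, (ysum_perm _ _ Hperm) in Hp. lia.
Qed.

Theorem mainTheorem2 :
  exists c : R, (0 < c)%R /\
  forall n m : nat, (1 <= m)%nat -> (m < n)%nat ->
  exists (I T : node -> Prop) (p0 : node),
    srp_instance n I T p0 /\
    has_card (fun v => I v /\ ~ T v) m /\
    simply_connected I /\ simply_connected T /\
    forall (s : nat -> config) (k : nat),
      solution I T p0 s k -> (c * INR m * INR n <= INR k)%R.
Proof.
  exists 1%R. split; [lra|]. intros n m Hm Hmn.
  exists (fun v => In v (line 1 n)), (fun v => In v (line (S m) n)), (vnode 1).
  split; [now apply line_shift_instance|].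
  split; [now apply line_shift_diff_card|].
  split; [apply line_simply_connected; lia|].
  split; [apply line_simply_connected; lia|].
  intros s k Hsol.
  pose proof (solution_ysum_bound n _ _ _ s k (line 1 n) (line (S m) n)
                (line_nodup _ _) (line_length _ _) (fun x => iff_refl _)
                (line_nodup _ _) (line_length _ _) (fun x => iff_refl _) Hsol) as Hk.
  rewrite !ysum_line, Nat2Z.inj_succ in Hk.
  assert (Hmn' : (m * n <= k)%nat) by nia.
  rewrite Rmult_1_l, <- mult_INR. now apply le_INR.
Qed.
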